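(* Let $E\subseteq\mathbb{F}_q^2$. Then $$\sum_{t\in\mathbb{F}_q^3}\nu_T(t)^2\lesssim \sum_{\theta\in O(\mathbb{F}_q^2)}\sum_{w\in\mathbb{F}_q^2}\lambda_\theta(w)^3.$$
   Context: Standing assumptions: $q=p^n$ with $p$ a prime, $p\equiv 3\pmod 4$, $n$ odd (so $-1$ is not a square in $\mathbb{F}_q$). For $x,y\in\mathbb{F}_q^2$, $\|x-y\|=(x_1-y_1)^2+(x_2-y_2)^2\in\mathbb{F}_q$. $O(\mathbb{F}_q^2)$ is the group of $2\times 2$ matrices $\theta$ over $\mathbb{F}_q$ with $\theta^T\theta=I$. For $E\subseteq\mathbb{F}_q^2$, $\theta\in O(\mathbb{F}_q^2)$ and $w\in\mathbb{F}_q^2$, $\lambda_\theta(w)=|\{(u,v)\in E^2: u-\theta v=w\}|$. For $t=(t_1,t_2,t_3)\in\mathbb{F}_q^3$, $\nu_T(t)=|\{(x,y,z)\in E^3: \|x-y\|=t_1,\ \|x-z\|=t_2,\ \|y-z\|=t_3\}|$. $A\lesssim B$ means $A\le cB$ with $c$ independent of $q$ and $E$. *)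

From mathcomp Require Import all_boot all_order all_algebra.
Set Implicit Arguments. Unset Strict Implicit. Unset Printing Implicit Defensive.
Import GRing.Theory.
Local Open Scope ring_scope.

Definition dist2 (F : finFieldType) (x y : 'cV[F]_2) : F :=
  \sum_(i < 2) (x i ord0 - y i ord0) ^+ 2.

Definition Orth2 (F : finFieldType) : {set 'M[F]_2} :=
  [set th : 'M[F]_2 | th^T *m th == 1%:M].

Definition lambda_th (F : finFieldType) (E : {set 'cV[F]_2})
  (th : 'M[F]_2) (w : 'cV[F]_2) : nat :=
  #|[set uv : 'cV[F]_2 * 'cV[F]_2 |
      [&& uv.1 \in E, uv.2 \in E & uv.1 - th *m uv.2 == w]]|.

Definition nuT (F : finFieldType) (E : {set 'cV[F]_2}) (t : F * F * F) : nat :=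
  #|[set xyz : 'cV[F]_2 * 'cV[F]_2 * 'cV[F]_2 |
      [&& xyz.1.1 \in E, xyz.1.2 \in E, xyz.2 \in E,
          dist2 xyz.1.1 xyz.1.2 == t.1.1,
          dist2 xyz.1.1 xyz.2 == t.1.2 &
          dist2 xyz.1.2 xyz.2 == t.2]]|.

From mathcomp Require Import all_boot all_order all_algebra finfield.
From mathcomp Require Import ring.
Set Implicit Arguments. Unset Strict Implicit. Unset Printing Implicit Defensive.
Import GRing.Theory.
Local Open Scope ring_scope.

(* Since #|F| = 3 mod 4, -1 is not a square in F, so the form x1^2 + x2^2 is
   anisotropic.  Then two triangles with equal side lengths are congruent under
   a map x |-> th x + w with th orthogonal: polarization recovers the inner
   product of the edge vectors u, v and Lagrange's identity
   |u|^2 |v|^2 = <u,v>^2 + (u x v)^2 recovers u x v up to sign; the rotation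
   taking the first edge onto its image also takes the second one there, because
   <u,.> and u x . determine a vector when |u| <> 0, and a reflection absorbs
   the sign.  Hence sum_t nu_T(t)^2, the number of pairs of congruent triangles
   of E, is at most the number of (th, w, pair of triangles related by th, w),
   which is sum_th sum_w lambda_th(w)^3: the inequality holds with C = 1. *)

Lemma sum_ord2 (R : nmodType) (f : 'I_2 -> R) : \sum_(i < 2) f i = f 0 + f 1.
Proof. by rewrite big_ord_recl big_ord1; congr (_ + f _); apply: val_inj. Qed.

Section PlaneGeometry.
Variable F : fieldType.
Local Notation V := 'cV[F]_2.

Lemma col2P (x y : V) : x 0 0 = y 0 0 -> x 1 0 = y 1 0 -> x = y.
Proof.
move=> e0 e1; apply/matrixP => i j; rewrite [j]ord1.
by case: i => [[|[|//]]] ?; [move: e0 | move: e1]; congr (x _ _ = y _ _); apply: val_inj.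
Qed.

Lemma mulmx_col2E (A : 'M[F]_2) (v : V) i : (A *m v) i 0 = A i 0 * v 0 0 + A i 1 * v 1 0.
Proof. by rewrite mxE sum_ord2. Qed.

Definition dotv (u v : V) : F := u 0 0 * v 0 0 + u 1 0 * v 1 0.
Definition crossv (u v : V) : F := u 0 0 * v 1 0 - u 1 0 * v 0 0.
Definition norm2 (u : V) : F := dotv u u.

Lemma norm2_0 : norm2 0 = 0.
Proof. by rewrite /norm2 /dotv !mxE mulr0 addr0. Qed.

Lemma dotv_polar (u v : V) : dotv u v *+ 2 = norm2 u + norm2 v - norm2 (v - u).
Proof. by rewrite /norm2 /dotv !mxE; ring. Qed.

Lemma lagrange_identity (u v : V) : norm2 u * norm2 v = dotv u v ^+ 2 + crossv u v ^+ 2.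
Proof. by rewrite /norm2 /dotv /crossv; ring. Qed.

Definition rot (c s : F) : 'M[F]_2 :=
  \matrix_(i, j) (if i == j then c else if i == 0 then - s else s).

Lemma rot_coords c s (v : V) :
  (rot c s *m v) 0 0 = c * v 0 0 - s * v 1 0 /\ (rot c s *m v) 1 0 = s * v 0 0 + c * v 1 0.
Proof. by rewrite !mulmx_col2E !mxE /=; split; ring. Qed.

Lemma rot_orthogonal c s : c ^+ 2 + s ^+ 2 = 1 -> (rot c s)^T *m rot c s = 1%:M.
Proof.
move=> cs1; apply/matrixP => i j; rewrite !mxE sum_ord2 !mxE.
by case: i => [[|[|//]]] ?; case: j => [[|[|//]]] ? /=; rewrite -cs1; ring.
Qed.

Lemma dotv_rot c s (u v : V) : c ^+ 2 + s ^+ 2 = 1 ->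
  dotv (rot c s *m u) (rot c s *m v) = dotv u v.
Proof.
move=> cs1; have [u0 u1] := rot_coords c s u; have [v0 v1] := rot_coords c s v.
rewrite /dotv u0 u1 v0 v1 -[RHS]mul1r -cs1; ring.
Qed.

Lemma crossv_rot c s (u v : V) : c ^+ 2 + s ^+ 2 = 1 ->
  crossv (rot c s *m u) (rot c s *m v) = crossv u v.
Proof.
move=> cs1; have [u0 u1] := rot_coords c s u; have [v0 v1] := rot_coords c s v.
rewrite /crossv u0 u1 v0 v1 -[RHS]mul1r -cs1; ring.
Qed.

Definition flip : 'M[F]_2 := \matrix_(i, j) ((i == j)%:R * (if i == 0 then 1 else -1)).

Lemma flip_coords (v : V) : (flip *m v) 0 0 = v 0 0 /\ (flip *m v) 1 0 = - v 1 0.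
Proof. by rewrite !mulmx_col2E !mxE /=; split; ring. Qed.

Lemma flip_orthogonal : flip^T *m flip = 1%:M.
Proof.
apply/matrixP => i j; rewrite !mxE sum_ord2 !mxE.
by case: i => [[|[|//]]] ?; case: j => [[|[|//]]] ? /=; ring.
Qed.

Lemma dotv_flip (u v : V) : dotv (flip *m u) (flip *m v) = dotv u v.
Proof.
have [u0 u1] := flip_coords u; have [v0 v1] := flip_coords v.
by rewrite /dotv u0 u1 v0 v1; ring.
Qed.

Lemma crossv_flip (u v : V) : crossv (flip *m u) (flip *m v) = - crossv u v.
Proof.
have [u0 u1] := flip_coords u; have [v0 v1] := flip_coords v.
by rewrite /crossv u0 u1 v0 v1; ring.
Qed.

Lemma orthogonal_mul (A B : 'M[F]_2) :
  A^T *m A = 1%:M -> B^T *m B = 1%:M -> (A *m B)^T *m (A *m B) = 1%:M.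
Proof. by move=> oA oB; rewrite trmx_mul -mulmxA (mulmxA A^T) oA mul1mx. Qed.

Hypothesis sqr_neq_opp1 : forall i : F, i ^+ 2 != -1.

Lemma two_neq0 : 2%:R != 0 :> F.
Proof.
apply: contraNneq (sqr_neq_opp1 1) => two0.
by rewrite expr1n -addr_eq0 -mulr2n two0.
Qed.

Lemma sqr_add_eq0 (r s : F) : r ^+ 2 + s ^+ 2 = 0 -> s = 0.
Proof.
move=> rs0; apply/eqP; apply: contraNT (sqr_neq_opp1 (r / s)) => s0.
have -> : (r / s) ^+ 2 = (r ^+ 2 + s ^+ 2) / s ^+ 2 - 1 by field.
by rewrite rs0 mul0r sub0r.
Qed.

Lemma norm2_eq0 (u : V) : norm2 u = 0 -> u = 0.
Proof.
rewrite /norm2 /dotv -!expr2 => u0.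
have u1 := sqr_add_eq0 u0; rewrite addrC in u0; have u00 := sqr_add_eq0 u0.
by apply: col2P; rewrite mxE ?u00 ?u1.
Qed.

Lemma norm2_neq0 (u : V) : u != 0 -> norm2 u != 0.
Proof. by apply: contra_neq => /norm2_eq0. Qed.

Lemma dotv_crossv_inj (u v w : V) : u != 0 ->
  dotv u v = dotv u w -> crossv u v = crossv u w -> v = w.
Proof.
move=> /norm2_neq0 nu dvw cvw.
have coord0 (z : V) : norm2 u * z 0 0 = u 0 0 * dotv u z - u 1 0 * crossv u z.
  by rewrite /norm2 /dotv /crossv; ring.
have coord1 (z : V) : norm2 u * z 1 0 = u 1 0 * dotv u z + u 0 0 * crossv u z.
  by rewrite /norm2 /dotv /crossv; ring.
by apply: col2P; apply: (mulfI nu); rewrite ?coord0 ?coord1 dvw cvw.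
Qed.

Lemma exists_rot_map (a b : V) : norm2 a = norm2 b ->
  exists c s, c ^+ 2 + s ^+ 2 = 1 /\ rot c s *m a = b.
Proof.
move=> ab; have [a0 | na] := eqVneq (norm2 a) 0.
  exists 1, 0; split; first by rewrite expr1n expr0n addr0.
  by rewrite (norm2_eq0 a0) mulmx0 (norm2_eq0 (etrans (esym ab) a0)).
exists (dotv a b / norm2 a), (crossv a b / norm2 a); split.
  by rewrite !expr_div_n -mulrDl -lagrange_identity -ab -expr2 divff ?expf_neq0.
have [r0 r1] := rot_coords (dotv a b / norm2 a) (crossv a b / norm2 a) a.
by apply: col2P; rewrite ?r0 ?r1; apply: (mulfI na); rewrite /norm2 /dotv /crossv in na *; field.
Qed.

Lemma exists_rot_map2 (u v p q : V) :
  norm2 u = norm2 p -> norm2 v = norm2 q ->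
  dotv u v = dotv p q -> crossv u v = crossv p q ->
  exists c s, [/\ c ^+ 2 + s ^+ 2 = 1, rot c s *m p = u & rot c s *m q = v].
Proof.
move=> nup nvq duv cuv; have [p0 | pnz] := eqVneq p 0.
  have [c [s [cs1 qv]]] := exists_rot_map (esym nvq).
  by exists c, s; rewrite p0 mulmx0 (@norm2_eq0 u) // nup p0 norm2_0.
have [c [s [cs1 pu]]] := exists_rot_map (esym nup).
have unz : u != 0 by apply: contra_neq (norm2_neq0 pnz) => u0; rewrite -nup u0 norm2_0.
exists c, s; split => //; apply: (dotv_crossv_inj unz).
  by rewrite -{1}pu dotv_rot.
by rewrite -{1}pu crossv_rot.
Qed.

Lemma exists_orthogonal_map2 (u v p q : V) :
  norm2 u = norm2 p -> norm2 v = norm2 q -> norm2 (v - u) = norm2 (q - p) ->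
  exists2 th : 'M[F]_2, th^T *m th = 1%:M & th *m p = u /\ th *m q = v.
Proof.
move=> nup nvq nd.
have duv : dotv u v = dotv p q.
  apply/eqP; rewrite -(inj_eq (mulIf two_neq0)) !mulr_natr.
  by rewrite !dotv_polar nup nvq nd.
have : crossv u v ^+ 2 = crossv p q ^+ 2.
  by have := lagrange_identity u v; rewrite nup nvq duv lagrange_identity => /addrI.
move/eqP; rewrite eqf_sqr => /orP[/eqP cuv | /eqP cuv].
  have [c [s [cs1 pu qv]]] := exists_rot_map2 nup nvq duv cuv.
  by exists (rot c s); first exact: rot_orthogonal.
have [|||| c [s [cs1 pu qv]]] := @exists_rot_map2 u v (flip *m p) (flip *m q).
- by rewrite nup /norm2 dotv_flip.
- by rewrite nvq /norm2 dotv_flip.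
- by rewrite dotv_flip.
- by rewrite crossv_flip cuv.
exists (rot c s *m flip); first exact: orthogonal_mul (rot_orthogonal cs1) flip_orthogonal.
by rewrite -!mulmxA.
Qed.

End PlaneGeometry.

Lemma subr_translate (W : zmodType) (x y a b : W) : a - b = y - x -> y - a = x - b.
Proof. by move=> h; rewrite -[y](subrK x) -h addrAC [a - b]addrC addrK addrC. Qed.

Section Triangles.
Variable F : finFieldType.
Local Notation V := 'cV[F]_2.

Lemma dist2E (x y : V) : dist2 x y = norm2 (y - x).
Proof. by rewrite /dist2 sum_ord2 /norm2 /dotv !mxE; ring. Qed.

Definition dists (a : V * V * V) : F * F * F :=
  (dist2 a.1.1 a.1.2, dist2 a.1.1 a.2, dist2 a.1.2 a.2).

Hypothesis sqr_neq_opp1 : forall i : F, i ^+ 2 != -1.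

Lemma congruent_triangles (a b : V * V * V) : dists a = dists b ->
  exists th w, th \in Orth2 F /\
    [/\ a.1.1 - th *m b.1.1 = w, a.1.2 - th *m b.1.2 = w & a.2 - th *m b.2 = w].
Proof.
case: a b => [[x y] z] [[x' y'] z'] [dxy dxz dyz].
have [|||th thO [pu qv]] :=
  exists_orthogonal_map2 sqr_neq_opp1 (u := y - x) (v := z - x) (p := y' - x') (q := z' - x').
- by rewrite -!dist2E.
- by rewrite -!dist2E.
- by rewrite !opprB !subrKA -!dist2E.
exists th, (x - th *m x'); split; first by rewrite inE; apply/eqP.
by split=> //=; apply: subr_translate; rewrite -mulmxBr.
Qed.

End Triangles.

Lemma sum_cube (I : finType) (f : I -> nat) :
  ((\sum_i f i) ^ 3 = \sum_(c : I * I * I) f c.1.1 * f c.1.2 * f c.2)%N.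
Proof.
rewrite !expnS expn0 muln1 mulnA big_distrlr pair_bigA big_distrlr pair_bigA.
exact: eq_bigr.
Qed.

Section Counting.
Variables (F : finFieldType) (E : {set 'cV[F]_2}).
Local Notation V := 'cV[F]_2.
Local Notation triangle := (V * V * V)%type.

Definition in_E3 (a : triangle) : bool := [&& a.1.1 \in E, a.1.2 \in E & a.2 \in E].

Definition in_lambda (th : 'M[F]_2) (w : V) (c : V * V) : bool :=
  [&& c.1 \in E, c.2 \in E & c.1 - th *m c.2 == w].

Lemma nuT_sum t : nuT E t = (\sum_(a : triangle) (in_E3 a && (dists a == t)))%N.
Proof.
rewrite /nuT -sum1dep_card big_mkcond /=; apply: eq_bigr => a _.
by case: t => [[t1 t2] t3]; rewrite /in_E3 /dists /= !xpair_eqE -!andbA.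
Qed.

Lemma lambda_sum th w : lambda_th E th w = (\sum_c in_lambda th w c)%N.
Proof. by rewrite /lambda_th -sum1dep_card big_mkcond. Qed.

Lemma sum_nuT_sqr : (\sum_t nuT E t ^ 2 =
  \sum_(a : triangle) \sum_(b : triangle) [&& in_E3 a, in_E3 b & dists a == dists b])%N.
Proof.
under eq_bigr => t _ do rewrite nuT_sum -mulnn big_distrlr /=.
rewrite exchange_big; apply: eq_bigr => a _; rewrite exchange_big; apply: eq_bigr => b _.
rewrite (bigD1 (dists a)) //= big1 => [|t ta]; last by rewrite eq_sym (negPf ta) andbF.
by rewrite eqxx andbT addn0 eq_sym; case: (in_E3 a); rewrite ?mul1n.
Qed.

Definition zip3 (ab : triangle * triangle) : (V * V) * (V * V) * (V * V) :=
  ((ab.1.1.1, ab.2.1.1), (ab.1.1.2, ab.2.1.2), (ab.1.2, ab.2.2)).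

Lemma zip3_bij : bijective zip3.
Proof.
exists (fun c => ((c.1.1.1, c.1.2.1, c.2.1), (c.1.1.2, c.1.2.2, c.2.2))).
  by case=> [[[? ?] ?] [[? ?] ?]].
by case=> [[[? ?] [? ?]] [? ?]].
Qed.

Lemma lambda_cube th w : (lambda_th E th w ^ 3 = \sum_(a : triangle) \sum_(b : triangle)
  in_lambda th w (a.1.1, b.1.1) * in_lambda th w (a.1.2, b.1.2) * in_lambda th w (a.2, b.2))%N.
Proof.
rewrite lambda_sum sum_cube pair_bigA (reindex zip3) /=; last exact: onW_bij zip3_bij.
exact: eq_bigr.
Qed.

Lemma sum_lambda_cube : (\sum_(th in Orth2 F) \sum_w lambda_th E th w ^ 3 =
  \sum_(a : triangle) \sum_(b : triangle) \sum_(th in Orth2 F) \sum_w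
  in_lambda th w (a.1.1, b.1.1) * in_lambda th w (a.1.2, b.1.2) * in_lambda th w (a.2, b.2))%N.
Proof.
under eq_bigr => th _ do under eq_bigr => w _ do rewrite lambda_cube.
under eq_bigr => th _ do rewrite exchange_big.
rewrite exchange_big; apply: eq_bigr => a _.
under eq_bigr => th _ do rewrite exchange_big.
by rewrite exchange_big.
Qed.

Hypothesis sqr_neq_opp1 : forall i : F, i ^+ 2 != -1.

Lemma congruent_pair_le (a b : triangle) :
  ([&& in_E3 a, in_E3 b & dists a == dists b] <= \sum_(th in Orth2 F) \sum_w
  in_lambda th w (a.1.1, b.1.1) * in_lambda th w (a.1.2, b.1.2) * in_lambda th w (a.2, b.2))%N.
Proof.
case/boolP: (_ && _) => // /and3P [Ea Eb /eqP ab].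
have [th [w [thO [e1 e2 e3]]]] := congruent_triangles sqr_neq_opp1 ab.
rewrite (bigD1 th) //= (bigD1 w) //= -addnA; apply: leq_trans (leq_addr _ _).
move: Ea Eb; rewrite /in_E3 /in_lambda /= e1 e2 e3 eqxx.
by case/and3P=> -> -> -> /and3P[-> -> ->].
Qed.

Lemma sum_nuT_sqr_le :
  (\sum_t nuT E t ^ 2 <= \sum_(th in Orth2 F) \sum_w lambda_th E th w ^ 3)%N.
Proof.
rewrite sum_nuT_sqr sum_lambda_cube.
by apply: leq_sum => a _; apply: leq_sum => b _; apply: congruent_pair_le.
Qed.

End Counting.

Lemma expn_odd_mod4 (p n : nat) : (p %% 4 = 3)%N -> odd n -> (p ^ n %% 4 = 3)%N.
Proof.
move=> p3 n_odd; rewrite -modnXm p3 -(odd_double_half n) n_odd add1n expnS.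
by rewrite -mul2n expnM -modnMm -modnXm /= exp1n.
Qed.

Lemma finField_sqr_neq_opp1 (F : finFieldType) :
  2%:R != 0 :> F -> (#|F| %% 4 = 3)%N -> forall i : F, i ^+ 2 != -1.
Proof.
move=> two q3 i; apply/eqP => i2.
(* [i ^+ #|F| = i] and [i ^+ 4 = 1] give [i = i ^+ 3 = - i]. *)
have : i = - i.
  rewrite -{1}(expf_card i) (divn_eq #|F| 4) q3 exprD mulnC exprM.
  by rewrite (exprM i 2 2) i2 sqrrN expr1n expr1n mul1r exprS i2 mulrN1.
move/eqP; rewrite -subr_eq0 opprK -mulr2n -mulr_natr mulf_eq0 (negPf two) orbF => /eqP i0.
by move/eqP: i2; rewrite i0 expr0n eq_sym oppr_eq0 oner_eq0.
Qed.

Theorem lemma2p1 :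
  exists C : nat,
  forall (p n : nat) (F : finFieldType),
    prime p -> p \in [pchar F] -> (p %% 4 = 3)%N -> odd n ->
    #|F| = (p ^ n)%N ->
    forall E : {set 'cV[F]_2},
      (\sum_(t : F * F * F) nuT E t ^ 2 <=
       C * \sum_(th in Orth2 F) \sum_(w : 'cV[F]_2) lambda_th E th w ^ 3)%N.
Proof.
exists 1%N => p n F p_prime p_char p3 n_odd cardF E.
have two : 2%:R != 0 :> F.
  rewrite -(dvdn_pcharf p_char) (dvdn_prime2 p_prime (isT : prime 2)).
  by apply/eqP => p2; rewrite p2 in p3.
rewrite mul1n; apply/sum_nuT_sqr_le/finField_sqr_neq_opp1 => //.
by rewrite cardF expn_odd_mod4.
Qed.
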